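(* Let $K=\mathbb{F}_3$ and $S$ a smooth cubic surface over $K$. Suppose $S$ contains a skew pair of $K$-lines $\ell_1,\ell_2$ such that neither $\ell_1$ nor $\ell_2$ contains a $K$-rational Eckardt point. Then $\mathrm{Span}(\ell_1(K)\cup\ell_2(K))=S(K)$.
   Context: A smooth cubic surface $S$ over $K$ is a nonsingular surface in $\mathbb{P}^3$ defined by a homogeneous cubic over $K$. A $K$-line is a line in $\mathbb{P}^3$ defined over $K$; lines ''on $S$'' are lines over $\overline{K}$ contained in $S$. A skew pair of lines is a pair of disjoint lines. An Eckardt point is a point of $S$ through which three of the lines on $S$ pass. For a line $\ell\not\subset S$, $\ell\cdot S=P+Q+R$ with multiplicity. For $B\subseteq S(K)$ define $B_0=B$ and $B_{n+1}$ as the set of $R\in S(K)$ such that either $R\in B_n$ or there exist $P,Q\in B_n$ and a $K$-line $\ell\not\subset S$ with $\ell\cdot S=P+Q+R$; $\mathrm{Span}(B)=\bigcup_n B_n$. *)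

From HB Require Import structures.
From mathcomp Require Import all_boot all_order all_algebra all_field.
Set Implicit Arguments. Unset Strict Implicit. Unset Printing Implicit Defensive.
Import Order.TTheory GRing.Theory Num.Theory.
Local Open Scope ring_scope.

Notation K := 'F_3.

Definition Kbar_pack := countable_algebraic_closure K.
Definition Kbar : countClosedFieldType := projT1 Kbar_pack.
Definition Kemb : {rmorphism K -> Kbar} := sval (projT2 Kbar_pack).

(* A homogeneous cubic form in x_0..x_3 with coefficients in R, given by a
   coefficient tensor: F(x) = sum_{i,j,k} c i j k x_i x_j x_k.
   (Every cubic form arises this way.) *)
Definition cubic (R : Type) := 'I_4 -> 'I_4 -> 'I_4 -> R.

Definition cubic_map (R S : Type) (f : R -> S) (c : cubic R) : cubic S :=
  fun i j k => f (c i j k).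

Definition ev (R : comNzRingType) (c : cubic R) (x : 'rV[R]_4) : R :=
  \sum_(i < 4) \sum_(j < 4) \sum_(k < 4) c i j k * x 0 i * x 0 j * x 0 k.

Definition dev (R : comNzRingType) (c : cubic R) (l : 'I_4) (x : 'rV[R]_4) : R :=
  \sum_(i < 4) \sum_(j < 4) \sum_(k < 4)
     c i j k * ((i == l)%:R * x 0 j * x 0 k + (j == l)%:R * x 0 i * x 0 k
                + (k == l)%:R * x 0 i * x 0 j).

Definition cbar (c : cubic K) : cubic Kbar := cubic_map Kemb c.

Definition smooth_cubic (c : cubic K) : Prop :=
  forall x : 'rV[Kbar]_4, x != 0 ->
    ~ (ev (cbar c) x = 0 /\ forall l : 'I_4, dev (cbar c) l x = 0).

(* Points of S(K): nonzero vectors of K^4 (points of P^3(K), up to scalars)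
   on which F vanishes. *)
Definition onS (c : cubic K) (x : 'rV[K]_4) : Prop := x != 0 /\ ev c x = 0.

(* Lines of P^3(Kbar): 2-dimensional row spaces of 2x4 matrices of rank 2. *)
Definition is_line (F : fieldType) (A : 'M[F]_(2, 4)) : Prop := \rank A = 2%N.

Definition line_on_S (c : cubic K) (A : 'M[Kbar]_(2, 4)) : Prop :=
  forall x : 'rV[Kbar]_4, (x <= A)%MS -> ev (cbar c) x = 0.

Definition eckardt (c : cubic K) (P : 'rV[K]_4) : Prop :=
  onS c P /\
  exists A1 A2 A3 : 'M[Kbar]_(2, 4),
    [/\ [/\ is_line A1, is_line A2 & is_line A3],
        [/\ line_on_S c A1, line_on_S c A2 & line_on_S c A3],
        [/\ (map_mx Kemb P <= A1)%MS, (map_mx Kemb P <= A2)%MS & (map_mx Kemb P <= A3)%MS] &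
        [/\ ~~ (A1 == A2)%MS, ~~ (A1 == A3)%MS & ~~ (A2 == A3)%MS]].

Definition Kpoint_of (A : 'M[K]_(2, 4)) (x : 'rV[K]_4) : Prop :=
  x != 0 /\ (x <= A)%MS.

(* S = P + Q + R for a K-line l (spanned by the rows u, v of A) not
   contained in S: restricting F to l, F(s u + t v) factors, as a binary cubic
   form over Kbar, as lambda * L_P * L_Q * L_R where L_X(s,t) = b s - a t is
   the linear form vanishing at the point X = a u + b v. *)
Definition third_point (c : cubic K) (P Q R : 'rV[K]_4) : Prop :=
  exists A : 'M[K]_(2, 4),
    is_line A /\ ~ line_on_S c (map_mx Kemb A) /\
    exists (aP bP aQ bQ aR bR : K) (lam : Kbar),
      [/\ P = aP *: row 0 A + bP *: row 1 A,
          Q = aQ *: row 0 A + bQ *: row 1 A,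
          R = aR *: row 0 A + bR *: row 1 A,
          lam != 0 &
          forall s t : Kbar,
            ev (cbar c) (s *: map_mx Kemb (row 0 A) + t *: map_mx Kemb (row 1 A))
            = lam * (Kemb bP * s - Kemb aP * t) * (Kemb bQ * s - Kemb aQ * t)
                  * (Kemb bR * s - Kemb aR * t)].

Fixpoint Bn (c : cubic K) (B : 'rV[K]_4 -> Prop) (n : nat) : 'rV[K]_4 -> Prop :=
  match n with
  | 0%N => B
  | n'.+1 => fun R => onS c R /\
      (Bn c B n' R \/
       exists P Q, Bn c B n' P /\ Bn c B n' Q /\ third_point c P Q R)
  end.

Definition Span (c : cubic K) (B : 'rV[K]_4 -> Prop) (x : 'rV[K]_4) : Prop :=
  exists n, Bn c B n x.

Definition skew_lines (A B : 'M[Kbar]_(2, 4)) : Prop :=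
  (A :&: B == (0 : 'M[Kbar]_(2, 4)))%MS.

Definition bcK (m n : nat) (A : 'M[K]_(m, n)) : 'M[Kbar]_(m, n) := map_mx Kemb A.

From HB Require Import structures.
From mathcomp Require Import all_boot all_order all_algebra all_field.
From mathcomp Require Import ring.
Import GRing.Theory.
Local Open Scope ring_scope.
Set Implicit Arguments. Unset Strict Implicit.

(* Every K-point x of the smooth cubic S lies in B_1, where B_0 = l1(K) u l2(K).
   Since l1, l2 are skew, K^4 = l1 (+) l2, so x = p + q with p in l1, q in l2;
   if p = 0 or q = 0 then x is in B_0.  Otherwise write F = ev c and D(x, w)
   for its polar (the derivative of F at x in direction w).
   - If D(p, q) <> 0, the line pq meets S in exactly p, q and x: x is the third
     point of the secant pq.
   - If D(p, q) = 0, the line pq lies in S.  In the plane spanned by l1 and q,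
     F restricts to s' t (a s + b s' + e t) (coordinates along p, p', q).  If
     a = 0, then either S is singular or p is a K-rational Eckardt point of l1
     (three lines of the pencil through p lie on S), both excluded; if a <> 0
     and a + e <> 0, the line through x tangent to S at a point A of l1 shows
     that x is the third point of A, A.  Doing the same on l2, the only case
     left is a + e = 0 on both sides, and then x is a singular point of S. *)

Section Polarization.
Variable R : comNzRingType.
Implicit Types (c : cubic R) (x y z w : 'rV[R]_4).

Definition tform c x y z : R :=
  \sum_(i < 4) \sum_(j < 4) \sum_(k < 4) c i j k * x 0 i * y 0 j * z 0 k.

Definition polar c x w : R := tform c w x x + tform c x w x + tform c x x w.

(* The full polarization: the coefficient of s1 s2 s3 in
   ev c (s1 x + s2 y + s3 z). *)
Definition polar3 c x y z : R :=
  tform c x y z + tform c x z y + tform c y x z + tform c y z x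
  + tform c z x y + tform c z y x.

Lemma ev_tform c x : ev c x = tform c x x x. Proof. by []. Qed.

Lemma tform_lin1 c a b x x' y z :
  tform c (a *: x + b *: x') y z = a * tform c x y z + b * tform c x' y z.
Proof.
rewrite /tform !mulr_sumr -big_split; apply: eq_bigr => i _.
rewrite !mulr_sumr -big_split; apply: eq_bigr => j _.
rewrite !mulr_sumr -big_split; apply: eq_bigr => k _.
by rewrite !mxE /=; ring.
Qed.

Lemma tform_lin2 c a b x x' y z :
  tform c y (a *: x + b *: x') z = a * tform c y x z + b * tform c y x' z.
Proof.
rewrite /tform !mulr_sumr -big_split; apply: eq_bigr => i _.
rewrite !mulr_sumr -big_split; apply: eq_bigr => j _.
rewrite !mulr_sumr -big_split; apply: eq_bigr => k _.
by rewrite !mxE /=; ring.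
Qed.

Lemma tform_lin3 c a b x x' y z :
  tform c y z (a *: x + b *: x') = a * tform c y z x + b * tform c y z x'.
Proof.
rewrite /tform !mulr_sumr -big_split; apply: eq_bigr => i _.
rewrite !mulr_sumr -big_split; apply: eq_bigr => j _.
rewrite !mulr_sumr -big_split; apply: eq_bigr => k _.
by rewrite !mxE /=; ring.
Qed.

Lemma add_as_comb x y : x + y = 1 *: x + 1 *: y. Proof. by rewrite !scale1r. Qed.

Lemma tformD1 c x x' y z : tform c (x + x') y z = tform c x y z + tform c x' y z.
Proof. by rewrite (add_as_comb x) tform_lin1 !mul1r. Qed.
Lemma tformD2 c x x' y z : tform c y (x + x') z = tform c y x z + tform c y x' z.
Proof. by rewrite (add_as_comb x) tform_lin2 !mul1r. Qed.
Lemma tformD3 c x x' y z : tform c y z (x + x') = tform c y z x + tform c y z x'.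
Proof. by rewrite (add_as_comb x) tform_lin3 !mul1r. Qed.
Lemma tformZ1 c a x y z : tform c (a *: x) y z = a * tform c x y z.
Proof. by rewrite -[a *: x]addr0 -(scale0r 0) tform_lin1 mul0r addr0. Qed.
Lemma tformZ2 c a x y z : tform c y (a *: x) z = a * tform c y x z.
Proof. by rewrite -[a *: x]addr0 -(scale0r 0) tform_lin2 mul0r addr0. Qed.
Lemma tformZ3 c a x y z : tform c y z (a *: x) = a * tform c y z x.
Proof. by rewrite -[a *: x]addr0 -(scale0r 0) tform_lin3 mul0r addr0. Qed.

Definition tform_multilin :=
  (tformD1, tformD2, tformD3, tformZ1, tformZ2, tformZ3).

Lemma ev_line c s t x y : ev c (s *: x + t *: y) =
  s ^+ 3 * ev c x + s ^+ 2 * t * polar c x y + s * t ^+ 2 * polar c y x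
  + t ^+ 3 * ev c y.
Proof. by rewrite /polar !ev_tform !tform_multilin; ring. Qed.

Lemma ev_plane c s1 s2 s3 x1 x2 x3 : ev c (s1 *: x1 + s2 *: x2 + s3 *: x3) =
  s1 ^+ 3 * ev c x1 + s2 ^+ 3 * ev c x2 + s3 ^+ 3 * ev c x3
  + s1 ^+ 2 * s2 * polar c x1 x2 + s1 * s2 ^+ 2 * polar c x2 x1
  + s1 ^+ 2 * s3 * polar c x1 x3 + s1 * s3 ^+ 2 * polar c x3 x1
  + s2 ^+ 2 * s3 * polar c x2 x3 + s2 * s3 ^+ 2 * polar c x3 x2
  + s1 * s2 * s3 * polar3 c x1 x2 x3.
Proof. by rewrite /polar /polar3 !ev_tform !tform_multilin; ring. Qed.

Lemma polarD c y u v : polar c y (u + v) = polar c y u + polar c y v.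
Proof. by rewrite /polar !tform_multilin; ring. Qed.

Lemma polarZ c y a u : polar c y (a *: u) = a * polar c y u.
Proof. by rewrite /polar !tform_multilin; ring. Qed.

Lemma polar_line c s t x y w : polar c (s *: x + t *: y) w =
  s ^+ 2 * polar c x w + s * t * polar3 c x y w + t ^+ 2 * polar c y w.
Proof. by rewrite /polar /polar3 !tform_multilin; ring. Qed.

Lemma polar_diag c x : polar c x x = ev c x + ev c x + ev c x.
Proof. by rewrite /polar ev_tform. Qed.

Lemma polar3_xyx c x y : polar3 c x y x = polar c x y + polar c x y.
Proof. by rewrite /polar /polar3; ring. Qed.

Lemma polar3_xyy c x y : polar3 c x y y = polar c y x + polar c y x.
Proof. by rewrite /polar /polar3; ring. Qed.

Lemma polar3C23 c x y z : polar3 c x y z = polar3 c x z y.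
Proof. by rewrite /polar3; ring. Qed.

Lemma polar3C12 c x y z : polar3 c x y z = polar3 c y x z.
Proof. by rewrite /polar3; ring. Qed.

Lemma ev_plane_two_lines c x x' y :
  ev c x = 0 -> ev c x' = 0 -> ev c y = 0 ->
  polar c x x' = 0 -> polar c x' x = 0 -> polar c x y = 0 -> polar c y x = 0 ->
  forall s s' t, ev c (s *: x + s' *: x' + t *: y) =
    s' * t * (polar3 c x x' y * s + polar c x' y * s' + polar c y x' * t).
Proof.
move=> e1 e2 e3 d1 d2 d3 d4 s s' t; rewrite ev_plane e1 e2 e3 d1 d2 d3 d4; ring.
Qed.

Lemma polar_delta c y l : polar c y (delta_mx 0 l) = dev c l y.
Proof.
rewrite /polar /tform /dev -!big_split; apply: eq_bigr => i _.
rewrite -!big_split; apply: eq_bigr => j _.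
rewrite -!big_split; apply: eq_bigr => k _.
by rewrite !mxE /=; ring.
Qed.
End Polarization.

Section BaseChange.
Variables (R S : comNzRingType) (f : {rmorphism R -> S}).
Implicit Types (c : cubic R) (x y z : 'rV[R]_4).
Local Notation fx x := (map_mx f x).

Lemma tform_map c x y z :
  tform (cubic_map f c) (fx x) (fx y) (fx z) = f (tform c x y z).
Proof.
rewrite /tform rmorph_sum; apply: eq_bigr => i _.
rewrite rmorph_sum; apply: eq_bigr => j _.
rewrite rmorph_sum; apply: eq_bigr => k _.
by rewrite !rmorphM !mxE.
Qed.

Lemma ev_map c x : ev (cubic_map f c) (fx x) = f (ev c x).
Proof. by rewrite !ev_tform tform_map. Qed.

Lemma polar_map c x y : polar (cubic_map f c) (fx x) (fx y) = f (polar c x y).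
Proof. by rewrite /polar !tform_map !rmorphD. Qed.

Lemma polar3_map c x y z :
  polar3 (cubic_map f c) (fx x) (fx y) (fx z) = f (polar3 c x y z).
Proof. by rewrite /polar3 !tform_map !rmorphD. Qed.
End BaseChange.

Local Notation mp := (map_mx Kemb).

Ltac lincomb :=
  apply/rowP => ?;
  rewrite !mxE ?(rmorphD, rmorphM, rmorphN, rmorph0, rmorph1); ring.

Section Vectors.
Variable F : fieldType.
Implicit Types (u v w x y : 'rV[F]_4).

Definition mk2 u v : 'M[F]_(2, 4) :=
  \matrix_(i < 2, j < 4) (if (i : nat) == 0%N then u 0 j else v 0 j).

Lemma mk2_r0 u v : row 0 (mk2 u v) = u.
Proof. by apply/rowP => j; rewrite !mxE. Qed.

Lemma mk2_r1 u v : row 1 (mk2 u v) = v.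
Proof. by apply/rowP => j; rewrite !mxE. Qed.

Lemma mk2_rows (A : 'M[F]_(2, 4)) : A = mk2 (row 0 A) (row 1 A).
Proof.
apply/matrixP => i j; rewrite !mxE.
by case: i => [[|[|//]] Hi] /=; congr (A _ j); apply: val_inj.
Qed.

Lemma mulmx_mk2 (w : 'rV[F]_2) u v : w *m mk2 u v = w 0 0 *: u + w 0 1 *: v.
Proof.
rewrite mulmx_sum_row big_ord_recl big_ord1.
congr (_ *: _ + _ *: _); try by apply/rowP => j; rewrite !mxE.
by congr (w 0 _); apply: val_inj.
Qed.

Lemma mk2_sub y u v : (y <= mk2 u v)%MS -> exists s t, y = s *: u + t *: v.
Proof. by case/submxP => W ->; rewrite mulmx_mk2; eauto. Qed.

Lemma mk2_sub_r0 u v : (u <= mk2 u v)%MS.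
Proof. by have := row_sub 0 (mk2 u v); rewrite mk2_r0. Qed.

Lemma mk2_sub_r1 u v : (v <= mk2 u v)%MS.
Proof. by have := row_sub 1 (mk2 u v); rewrite mk2_r1. Qed.

Lemma sub_mk2 s t u v : ((s *: u + t *: v)%R <= mk2 u v)%MS.
Proof.
by apply: addmx_sub; apply: scalemx_sub; rewrite ?mk2_sub_r0 ?mk2_sub_r1.
Qed.

Definition indep2 u v := forall a b, a *: u + b *: v = 0 -> a = 0 /\ b = 0.

Lemma row_free_of m (A : 'M[F]_(m, 4)) :
  (forall w : 'rV_m, w *m A = 0 -> w = 0) -> row_free A.
Proof.
move=> H; rewrite -kermx_eq0; apply/rowV0P => v /sub_kermxP; exact: H.
Qed.

Lemma indep2_rank u v : indep2 u v <-> \rank (mk2 u v) = 2%N.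
Proof.
split=> [H | /eqP Hr a b Hab].
  apply/eqP; apply: row_free_of => w; rewrite mulmx_mk2 => /H [h0 h1].
  apply/rowP => j; rewrite mxE.
  case: j => [[|[|//]] Hj]; [rewrite -h0 | rewrite -h1];
    by congr (w 0 _); apply: val_inj.
have := row_free_inj Hr
  (x1 := \row_(j < 2) (if (j : nat) == 0%N then a else b)) (x2 := 0).
rewrite mul0mx mulmx_mk2 !mxE /= => /(_ Hab) /rowP H.
by split; [have := H 0 | have := H 1]; rewrite !mxE.
Qed.

Lemma indep2_neq0r u v : indep2 u v -> v != 0.
Proof.
move=> H; apply/eqP => v0.
have [_ /eqP] : (0 : F) = 0 /\ (1 : F) = 0.
  by apply: H; rewrite v0 scale0r scaler0 addr0.
by rewrite oner_eq0.
Qed.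

Definition mk4 u0 u1 u2 u3 : 'M[F]_4 :=
  \matrix_(i < 4, j < 4) (if (i : nat) == 0%N then u0 0 j else
     if (i : nat) == 1%N then u1 0 j else if (i : nat) == 2%N then u2 0 j
     else u3 0 j).

Lemma mulmx_mk4 (w : 'rV[F]_4) u0 u1 u2 u3 : w *m mk4 u0 u1 u2 u3 =
  w 0 (inord 0) *: u0 + w 0 (inord 1) *: u1 + w 0 (inord 2) *: u2
  + w 0 (inord 3) *: u3.
Proof.
rewrite mulmx_sum_row !big_ord_recl big_ord0 addr0 !addrA.
congr (_ *: _ + _ *: _ + _ *: _ + _ *: _);
  try (apply/rowP => j; rewrite !mxE //);
  by congr (w 0 _); apply: val_inj; rewrite /= inordK.
Qed.

Definition indep4 u0 u1 u2 u3 := forall a b c d,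
  a *: u0 + b *: u1 + c *: u2 + d *: u3 = 0 -> [/\ a = 0, b = 0, c = 0 & d = 0].

Lemma span4 u0 u1 u2 u3 : indep4 u0 u1 u2 u3 ->
  forall x, exists a b c d, x = a *: u0 + b *: u1 + c *: u2 + d *: u3.
Proof.
move=> H x.
have Hu : row_free (mk4 u0 u1 u2 u3).
  apply: row_free_of => w; rewrite mulmx_mk4 => /H [h0 h1 h2 h3].
  apply/rowP => j; rewrite mxE.
  case: j => [[|[|[|[|//]]]] Hj]; [rewrite -h0|rewrite -h1|rewrite -h2|rewrite -h3];
    by congr (w 0 _); apply: val_inj; rewrite /= inordK.
move: Hu; rewrite row_free_unit => Hu.
by rewrite -(mulmxKV Hu x) mulmx_mk4; eauto.
Qed.

Lemma indep4_swap_mid u0 u1 u2 u3 : indep4 u0 u1 u2 u3 -> indep4 u0 u2 u1 u3.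
Proof.
move=> H a b c d E; have [] := H a c b d; last by [].
by rewrite (addrAC (a *: u0)).
Qed.

Lemma indep4_of u0 u1 v0 v1 (L1 L2 : 'M[F]_(2, 4)) :
  indep2 u0 u1 -> indep2 v0 v1 ->
  (u0 <= L1)%MS -> (u1 <= L1)%MS -> (v0 <= L2)%MS -> (v1 <= L2)%MS ->
  (forall y, (y <= L1)%MS -> (y <= L2)%MS -> y = 0) ->
  indep4 u0 u1 v0 v1.
Proof.
move=> H1 H2 s0 s1 s2 s3 Hc a b c d Habcd.
have HP : a *: u0 + b *: u1 = - (c *: v0 + d *: v1).
  by apply/eqP; rewrite -subr_eq0 opprK addrA Habcd.
have HP0 : a *: u0 + b *: u1 = 0.
  apply: Hc; first by apply: addmx_sub; apply: scalemx_sub.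
  rewrite HP (eqmx_opp (c *: v0 + d *: v1)); apply: addmx_sub; exact: scalemx_sub.
have [ha hb] := H1 _ _ HP0.
have HQ0 : c *: v0 + d *: v1 = 0 by apply: oppr_inj; rewrite -HP HP0 oppr0.
by have [hc hd] := H2 _ _ HQ0.
Qed.

Lemma line_basis (L : 'M[F]_(2, 4)) : is_line L -> indep2 (row 0 L) (row 1 L).
Proof. by move=> H; apply/indep2_rank; rewrite -mk2_rows. Qed.

Lemma extend_basis (L : 'M[F]_(2, 4)) p : is_line L -> (p <= L)%MS ->
  p != 0 -> exists p', (p' <= L)%MS /\ indep2 p p'.
Proof.
move=> /line_basis Hi sp np.
move: sp; rewrite {1}(mk2_rows L) => /mk2_sub [s [t Ep]].
have [t0|tn0] := eqVneq t 0.
  have s0 : s != 0 by apply: contraNneq np => s0; rewrite Ep s0 t0 !scale0r addr0.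
  exists (row 1 L); split=> [|al be H]; first exact: row_sub.
  have /Hi [] : (al * s) *: row 0 L + (al * t + be) *: row 1 L = 0.
    by rewrite -H Ep; lincomb.
  move/eqP; rewrite mulf_eq0 (negbTE s0) orbF => /eqP a0.
  by rewrite a0 t0 mul0r add0r.
exists (row 0 L); split=> [|al be H]; first exact: row_sub.
have /Hi [] : (al * s + be) *: row 0 L + (al * t) *: row 1 L = 0.
  by rewrite -H Ep; lincomb.
move=> h1 /eqP; rewrite mulf_eq0 (negbTE tn0) orbF => /eqP a0.
by move: h1; rewrite a0 mul0r add0r.
Qed.
End Vectors.

Section MapVectors.
Variables (F F' : fieldType) (f : {rmorphism F -> F'}).

Lemma map_mk2 (u v : 'rV[F]_4) : map_mx f (mk2 u v) = mk2 (map_mx f u) (map_mx f v).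
Proof. by apply/matrixP => i j; rewrite !mxE; case: ifP. Qed.

Lemma indep2_map (u v : 'rV[F]_4) : indep2 u v -> indep2 (map_mx f u) (map_mx f v).
Proof.
by move=> /indep2_rank H; apply/indep2_rank; rewrite -map_mk2 mxrank_map.
Qed.
End MapVectors.

Lemma F3_double_eq0 (x : K) : x + x = 0 -> x = 0.
Proof.
have three0 : 1 + 1 + 1 = 0 :> K by apply/eqP.
have triple : x + x + x = 0 by rewrite -{1 2 3}[x]mul1r -!mulrDl three0 mul0r.
by move=> x2; rewrite x2 add0r in triple.
Qed.

Lemma binary_quadratic_root (C : closedFieldType) (al be ga : C) : exists s t,
  ((s != 0) || (t != 0)) /\ al * s ^+ 2 + be * s * t + ga * t ^+ 2 = 0.
Proof.
have [a0|an0] := eqVneq al 0.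
  by exists 1, 0; rewrite oner_neq0 a0; split=> //; ring.
have [x hx] := @solve_monicpoly C 2
  (fun i => if i == 0%N then - ga / al else - be / al) isT.
exists x, 1; rewrite oner_neq0 orbT; split=> //.
move: hx; rewrite !big_ord_recl big_ord0 addr0 /= expr0 mulr1 expr1 => ->.
have -> : al * (- ga / al + - be / al * x) = (al / al) * (- ga - be * x) by ring.
by rewrite divff //; ring.
Qed.

Lemma ev_on_line c (L : 'M[K]_(2, 4)) x :
  line_on_S c (bcK L) -> (x <= L)%MS -> ev c x = 0.
Proof.
move=> H sx; have := H (mp x); rewrite map_submx ev_map => /(_ sx) /eqP.
by rewrite fmorph_eq0 => /eqP.
Qed.

Lemma line_polars c (L : 'M[K]_(2, 4)) u v : line_on_S c (bcK L) ->
  (u <= L)%MS -> (v <= L)%MS ->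
  [/\ ev c u = 0, ev c v = 0, polar c u v = 0 & polar c v u = 0].
Proof.
move=> H su sv.
have sum_on : ((1 *: u + 1 *: v)%R <= L)%MS.
  by apply: addmx_sub; apply: scalemx_sub.
have diff_on : ((1 *: u + (-1) *: v)%R <= L)%MS.
  by apply: addmx_sub; apply: scalemx_sub.
have eu := ev_on_line H su; have ev' := ev_on_line H sv.
move: (ev_on_line H sum_on) (ev_on_line H diff_on); rewrite !ev_line eu ev'.
move=> hsum hdiff; have Dvu : polar c v u = 0.
  apply: F3_double_eq0; rewrite -[RHS](addr0 0).
  by rewrite -[in X in _ = X + _]hsum -[in X in _ = _ + X]hdiff; ring.
by split=> //; rewrite -hsum Dvu; ring.
Qed.

Lemma skew_meet0 (l1 l2 : 'M[K]_(2, 4)) : skew_lines (bcK l1) (bcK l2) ->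
  forall y : 'rV[K]_4, (y <= l1)%MS -> (y <= l2)%MS -> y = 0.
Proof.
move=> /andP [H _] y s1 s2.
have H1 : (mp y <= (bcK l1 :&: bcK l2))%MS by rewrite sub_capmx !map_submx s1 s2.
by have := submx_trans H1 H; rewrite eqmx0 submx0 map_mx_eq0 => /eqP.
Qed.

Lemma skew_decompose (l1 l2 : 'M[K]_(2, 4)) :
  is_line l1 -> is_line l2 -> skew_lines (bcK l1) (bcK l2) ->
  forall x : 'rV[K]_4, exists p q, [/\ (p <= l1)%MS, (q <= l2)%MS & x = p + q].
Proof.
move=> Hl1 Hl2 Hsk x.
have basis : indep4 (row 0 l1) (row 1 l1) (row 0 l2) (row 1 l2).
  by apply: (indep4_of (line_basis Hl1) (line_basis Hl2)) (skew_meet0 Hsk);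
    exact: row_sub.
have [a [b [c' [d ->]]]] := span4 basis x.
exists (a *: row 0 l1 + b *: row 1 l1), (c' *: row 0 l2 + d *: row 1 l2).
by split; rewrite ?addrA //; apply: addmx_sub; apply: scalemx_sub; exact: row_sub.
Qed.

Lemma smooth_polar_basis c p p' q q' (y : 'rV[Kbar]_4) : smooth_cubic c ->
  indep4 p p' q q' -> y != 0 -> ev (cbar c) y = 0 ->
  polar (cbar c) y (mp p) = 0 -> polar (cbar c) y (mp p') = 0 ->
  polar (cbar c) y (mp q) = 0 -> polar (cbar c) y (mp q') = 0 -> False.
Proof.
move=> Hs Hi ny ey h1 h2 h3 h4; apply: (Hs y ny); split => // l.
rewrite -polar_delta -(map_delta_mx Kemb).
have [a [b [c' [d ->]]]] := span4 Hi (delta_mx 0 l).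
by rewrite !map_mxD !map_mxZ !polarD !polarZ h1 h2 h3 h4 !mulr0 !addr0.
Qed.

(* If the line uv lies on S and the polar quadric of a further basis vector w
   contains it, the binary quadric cut out by the polar of w' has a zero on the
   line, which is then a singular point of S. *)
Lemma polar_line_singular c u v w w' : smooth_cubic c -> indep4 u v w w' ->
  ev c u = 0 -> ev c v = 0 -> polar c u v = 0 -> polar c v u = 0 ->
  polar c u w = 0 -> polar3 c u v w = 0 -> polar c v w = 0 -> False.
Proof.
move=> Hs Hi eu ev' Duv Dvu Duw Euvw Dvw.
have [s [t [nz Hst]]] := binary_quadratic_root
  (Kemb (polar c u w')) (Kemb (polar3 c u v w')) (Kemb (polar c v w')).
have iuv : indep2 u v.
  by move=> a b H; have [] := Hi a b 0 0; rewrite ?H ?scale0r ?addr0.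
apply: (smooth_polar_basis (y := s *: mp u + t *: mp v) Hs Hi).
- apply/eqP => y0; have [s0 t0] := indep2_map iuv y0.
  by move: nz; rewrite s0 t0 eqxx.
- by rewrite ev_line !ev_map !polar_map eu ev' Duv Dvu rmorph0; ring.
- rewrite polar_line !polar_map polar3_map polar_diag polar3_xyx eu Duv Dvu.
  by rewrite !rmorph0; ring.
- rewrite polar_line !polar_map polar3_map polar_diag polar3_xyy ev' Duv Dvu.
  by rewrite !rmorph0; ring.
- by rewrite polar_line !polar_map polar3_map Duw Euvw Dvw rmorph0; ring.
- by rewrite polar_line !polar_map polar3_map -Hst; ring.
Qed.

(* Non-containment is witnessed by a
   K-point (s0 : t0) where the product of the three linear forms is nonzero. *)
Lemma third_point_line c u v (P Q R : 'rV[K]_4) aP bP aQ bQ aR bR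
    (lam : Kbar) (s0 t0 : K) :
  indep2 u v ->
  P = aP *: u + bP *: v -> Q = aQ *: u + bQ *: v -> R = aR *: u + bR *: v ->
  lam != 0 ->
  (forall s t : Kbar, ev (cbar c) (s *: mp u + t *: mp v) =
     lam * (Kemb bP * s - Kemb aP * t) * (Kemb bQ * s - Kemb aQ * t)
         * (Kemb bR * s - Kemb aR * t)) ->
  (bP * s0 - aP * t0) * (bQ * s0 - aQ * t0) * (bR * s0 - aR * t0) != 0 ->
  third_point c P Q R.
Proof.
move=> iuv EP EQ ER nlam fact nz.
exists (mk2 u v); split; first exact/indep2_rank.
split.
  move=> /(_ (mp (s0 *: u + t0 *: v))); rewrite map_submx sub_mk2 => /(_ isT).
  rewrite map_mxD !map_mxZ fact (_ : _ * _ * _ = lam * Kemb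
    ((bP * s0 - aP * t0) * (bQ * s0 - aQ * t0) * (bR * s0 - aR * t0))).
    by apply/eqP; rewrite mulf_neq0 // fmorph_eq0.
  by rewrite !rmorphM !rmorphB !rmorphM; ring.
by exists aP, bP, aQ, bQ, aR, bR, lam; rewrite mk2_r0 mk2_r1.
Qed.

Lemma polar_opp_of_sum (R : comNzRingType) (c : cubic R) (p q : 'rV[R]_4) :
  ev c p = 0 -> ev c q = 0 -> ev c (p + q) = 0 -> polar c q p = - polar c p q.
Proof.
move=> evp evq; rewrite (add_as_comb p) ev_line evp evq => evpq.
by apply/eqP; rewrite -subr_eq0 opprK -evpq; apply/eqP; ring.
Qed.

(* The secant case: if D(p, q) <> 0, F restricts to -D(p, q) s t (s - t) on the
   line pq, which is not on S (the value at (1 : -1) is 2 D(p, q) <> 0). *)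
Lemma secant_third_point c p q : indep2 p q ->
  ev c p = 0 -> ev c q = 0 -> ev c (p + q) = 0 -> polar c p q != 0 ->
  third_point c p q (p + q).
Proof.
move=> ipq evp evq evpq nD.
have Dqp := polar_opp_of_sum evp evq evpq.
apply: (third_point_line (aP := 1) (bP := 0) (aQ := 0) (bQ := 1) (aR := 1)
  (bR := 1) (lam := Kemb (- polar c p q)) (s0 := 1) (t0 := -1) ipq).
- by rewrite scale1r scale0r addr0.
- by rewrite scale0r add0r scale1r.
- by rewrite !scale1r.
- by rewrite fmorph_eq0 oppr_eq0.
- move=> s t; rewrite ev_line !ev_map !polar_map evp evq Dqp.
  by rewrite !rmorph0 !rmorph1 rmorphN; ring.
- by [].
Qed.

(* The plane spanned by a K-line l of S and a point q of S: p, p' span l, the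
   line pq lies on S (D(p, q) = D(q, p) = 0) and p, p', q, q' is a basis. *)
Section PlaneThroughLine.
Variables (c : cubic K) (l : 'M[K]_(2, 4)) (p p' q q' : 'rV[K]_4).
Hypotheses (Hs : smooth_cubic c) (HlS : line_on_S c (bcK l)).
Hypotheses (sp : (p <= l)%MS) (sp' : (p' <= l)%MS) (basis : indep4 p p' q q').
Hypotheses (evq : ev c q = 0) (Dpq : polar c p q = 0) (Dqp : polar c q p = 0).

(* The coefficients of the residual linear form of F on the plane. *)
Local Notation a := (polar3 c p p' q).
Local Notation b := (polar c p' q).
Local Notation e := (polar c q p').

Let l_facts := line_polars HlS sp sp'.
Let evp : ev c p = 0. Proof. by case: l_facts. Qed.
Let evp' : ev c p' = 0. Proof. by case: l_facts. Qed.
Let Dpp' : polar c p p' = 0. Proof. by case: l_facts. Qed.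
Let Dp'p : polar c p' p = 0. Proof. by case: l_facts. Qed.

(* p is a K-point of S (used implicitly by the closing tactics). *)
Let p_neq0 : p != 0.
Proof.
apply/eqP => p0; have [|/eqP] := @basis 1 0 0 0.
  by rewrite p0 !scaler0 !scale0r !addr0.
by rewrite oner_eq0.
Qed.

Lemma plane_cubic (s s' t : Kbar) :
  ev (cbar c) (s *: mp p + s' *: mp p' + t *: mp q) =
  s' * t * (Kemb a * s + Kemb b * s' + Kemb e * t).
Proof.
have ev0 x : ev c x = 0 -> ev (cbar c) (mp x) = 0.
  by move=> h; rewrite ev_map h rmorph0.
have polar0 x y : polar c x y = 0 -> polar (cbar c) (mp x) (mp y) = 0.
  by move=> h; rewrite polar_map h rmorph0.
rewrite ev_plane_two_lines; first by rewrite polar3_map !polar_map.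
all: by [apply: ev0 | apply: polar0].
Qed.

(* If a <> 0 and a + e <> 0, the point x = p + q is the third point of the
   tangent at A = b p - a p' in l. *)
Lemma tangent_third_point : a != 0 -> a + e != 0 ->
  exists A, Kpoint_of l A /\ third_point c A A (p + q).
Proof.
move=> an0 aen0; set A := b *: p + (- a) *: p'.
have iA : indep2 (p + q) A.
  move=> al be H; have [|h1 h2 h3 _] := @basis (al + be * b) (- (be * a)) al 0.
    by rewrite -H /A; lincomb.
  split=> //; move/eqP: h2; rewrite oppr_eq0 mulf_eq0 (negbTE an0) orbF.
  by move/eqP.
exists A; split.
  split; first exact: indep2_neq0r iA.
  by apply: addmx_sub; apply: scalemx_sub.
apply: (third_point_line (aP := 0) (bP := 1) (aQ := 0) (bQ := 1) (aR := 1)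
  (bR := 0) (lam := Kemb a * (Kemb a + Kemb e)) (s0 := 1) (t0 := 1) iA).
- by rewrite scale0r add0r scale1r.
- by rewrite scale0r add0r scale1r.
- by rewrite scale1r scale0r addr0.
- by rewrite -rmorphD mulf_neq0 ?fmorph_eq0.
- move=> s t; rewrite (_ : s *: mp (p + q) + t *: mp A =
     (s + t * Kemb b) *: mp p + (- (t * Kemb a)) *: mp p' + s *: mp q).
    by rewrite plane_cubic !rmorph0 !rmorph1; ring.
  by rewrite /A; lincomb.
- by [].
Qed.

Definition pencil (al be : K) : 'M[K]_(2, 4) := mk2 p (al *: p' + be *: q).

Lemma pencil_is_line al be :
  (al != 0) || (be != 0) -> is_line (bcK (pencil al be)).
Proof.
move=> nz; rewrite /is_line /bcK mxrank_map; apply/indep2_rank => x y H.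
have [|h1 h2 h3 _] := @basis x (y * al) (y * be) 0.
  by rewrite -H; lincomb.
split=> //; apply/eqP; move: nz; apply: contraTT => yn0.
by move/eqP: h2; move/eqP: h3; rewrite !mulf_eq0 (negbTE yn0) /= => -> ->.
Qed.

Lemma pencil_on_S al be : a = 0 -> al * be * (b * al + e * be) = 0 ->
  line_on_S c (bcK (pencil al be)).
Proof.
move=> a0 root y; rewrite /bcK map_mk2 => /mk2_sub [s [t ->]].
rewrite (_ : s *: mp p + t *: mp (al *: p' + be *: q) =
   s *: mp p + (t * Kemb al) *: mp p' + (t * Kemb be) *: mp q); last by lincomb.
rewrite plane_cubic a0 rmorph0.
transitivity (t ^+ 3 * Kemb (al * be * (b * al + e * be))).
  by rewrite !(rmorphM, rmorphD); ring.
by rewrite root rmorph0 mulr0.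
Qed.

Lemma pencil_distinct al be ga de : al * de - be * ga != 0 ->
  ~~ (bcK (pencil al be) == bcK (pencil ga de))%MS.
Proof.
move=> det; apply/negP => /andP [_ sub].
have : ((ga *: p' + de *: q)%R <= pencil al be)%MS.
  rewrite -(map_submx Kemb); apply: submx_trans sub.
  by rewrite /bcK map_submx; exact: mk2_sub_r1.
move=> /mk2_sub [s [t Est]].
have [|_ h2 h3 _] := @basis (- s) (ga - t * al) (de - t * be) 0.
  by rewrite -[RHS](subrr (ga *: p' + de *: q)) {2}Est; lincomb.
move: det; rewrite (subr0_eq h2) (subr0_eq h3); apply/negP; rewrite negbK.
by apply/eqP; ring.
Qed.

Lemma eckardt_point : a = 0 -> b != 0 -> e != 0 -> eckardt c p.
Proof.
move=> a0 bn0 en0; split; first by [].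
exists (bcK (pencil 1 0)), (bcK (pencil 0 1)), (bcK (pencil e (- b))).
split.
- by split; apply: pencil_is_line; rewrite ?oner_neq0 ?en0.
- by split; apply: pencil_on_S => //; ring.
- by split; rewrite /bcK map_submx; exact: mk2_sub_r0.
- by split; apply: pencil_distinct; rewrite ?mulr0 ?mul0r ?subr0 ?sub0r ?mulr1
    ?mul1r ?oppr_eq0 ?oner_neq0.
Qed.

Lemma tangent_or_relation : (forall P, Kpoint_of l P -> ~ eckardt c P) ->
  (exists A, Kpoint_of l A /\ third_point c A A (p + q)) \/ a + e = 0.
Proof.
move=> noE; have [a0|an0] := eqVneq a 0; last first.
  have [|aen0] := eqVneq (a + e) 0; first by right.
  by left; exact: tangent_third_point.
exfalso; have [b0|bn0] := eqVneq b 0.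
  exact: (polar_line_singular Hs basis evp evp' Dpp' Dp'p Dpq a0 b0).
have [e0|en0] := eqVneq e 0.
  have basis_pqp' := indep4_swap_mid basis.
  apply: (polar_line_singular Hs basis_pqp' evp evq Dpq Dqp Dpp' _ e0).
  by rewrite polar3C23.
by apply: (noE p); [split | exact: eckardt_point].
Qed.
End PlaneThroughLine.

Lemma sum_point_singular (c : cubic K) (p p' q q' : 'rV[K]_4) :
  smooth_cubic c -> indep4 p p' q q' ->
  ev c p = 0 -> ev c q = 0 -> polar c p p' = 0 -> polar c q q' = 0 ->
  polar c p q = 0 -> polar c q p = 0 ->
  polar3 c p p' q + polar c q p' = 0 -> polar3 c q q' p + polar c p q' = 0 ->
  False.
Proof.
move=> Hs basis evp evq Dpp' Dqq' Dpq Dqp rel1 rel2.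
have polar_sum w : polar c (p + q) w = polar c p w + polar3 c p q w + polar c q w.
  by rewrite (add_as_comb p) polar_line; ring.
have polar0 w : polar c (p + q) w = 0 -> polar (cbar c) (mp (p + q)) (mp w) = 0.
  by move=> h; rewrite polar_map h rmorph0.
apply: (smooth_polar_basis (y := mp (p + q)) Hs basis).
- rewrite map_mx_eq0; apply/eqP => pq0; have [|/eqP] := basis 1 0 1 0.
    by rewrite !scale1r !scale0r !addr0.
  by rewrite oner_eq0.
- rewrite ev_map (_ : ev c (p + q) = 0) ?rmorph0 //.
  by rewrite (add_as_comb p) ev_line evp evq Dpq Dqp; ring.
- by apply: polar0; rewrite polar_sum polar_diag polar3_xyx evp Dpq Dqp; ring.
- by apply: polar0; rewrite polar_sum Dpp' polar3C23 add0r.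
- by apply: polar0; rewrite polar_sum polar_diag polar3_xyy evq Dpq Dqp; ring.
- by apply: polar0; rewrite polar_sum Dqq' polar3C12 polar3C23 addr0 addrC.
Qed.

Lemma sum_third_point (c : cubic K) (l1 l2 : 'M[K]_(2, 4)) (p q : 'rV[K]_4) :
  smooth_cubic c -> is_line l1 -> is_line l2 ->
  line_on_S c (bcK l1) -> line_on_S c (bcK l2) -> skew_lines (bcK l1) (bcK l2) ->
  (forall P, Kpoint_of l1 P -> ~ eckardt c P) ->
  (forall P, Kpoint_of l2 P -> ~ eckardt c P) ->
  (p <= l1)%MS -> (q <= l2)%MS -> p != 0 -> q != 0 -> ev c (p + q) = 0 ->
  exists P Q, [/\ Kpoint_of l1 P \/ Kpoint_of l2 P,
    Kpoint_of l1 Q \/ Kpoint_of l2 Q & third_point c P Q (p + q)].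
Proof.
move=> Hs Hl1 Hl2 HS1 HS2 Hsk noE1 noE2 sp sq np nq evpq.
have [p' [sp' ipp']] := extend_basis Hl1 sp np.
have [q' [sq' iqq']] := extend_basis Hl2 sq nq.
have basis := indep4_of ipp' iqq' sp sp' sq sq' (skew_meet0 Hsk).
have basis' : indep4 q q' p p'.
  apply: (indep4_of iqq' ipp' sq sq' sp sp') => y s2 s1.
  exact: skew_meet0 Hsk y s1 s2.
have [evp _ Dpp' _] := line_polars HS1 sp sp'.
have [evq _ Dqq' _] := line_polars HS2 sq sq'.
have Dqp := polar_opp_of_sum evp evq evpq.
have [Dpq0|nDpq] := eqVneq (polar c p q) 0; last first.
  exists p, q; split; [by left | by right |].
  apply: secant_third_point => // al be H.
  by have [|-> _ -> _] := basis al 0 be 0; rewrite // !scale0r !addr0.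
rewrite Dpq0 oppr0 in Dqp.
have [[A [HA HT]]|rel1] :=
  tangent_or_relation Hs HS1 sp sp' basis evq Dpq0 Dqp noE1.
  by exists A, A; split=> //; left.
have [[A [HA HT]]|rel2] :=
  tangent_or_relation Hs HS2 sq sq' basis' evp Dqp Dpq0 noE2.
  by exists A, A; rewrite addrC; split=> //; right.
by case: (sum_point_singular Hs basis evp evq Dpp' Dqq' Dpq0 Dqp rel1 rel2).
Qed.

Theorem mainTheorem15 (c : cubic K) (l1 l2 : 'M[K]_(2, 4)) :
  smooth_cubic c ->
  is_line l1 -> is_line l2 ->
  line_on_S c (bcK l1) -> line_on_S c (bcK l2) ->
  skew_lines (bcK l1) (bcK l2) ->
  (forall P, Kpoint_of l1 P -> ~ eckardt c P) ->
  (forall P, Kpoint_of l2 P -> ~ eckardt c P) ->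
  forall x : 'rV[K]_4, onS c x <->
    Span c (fun y => Kpoint_of l1 y \/ Kpoint_of l2 y) x.
Proof.
move=> Hs Hl1 Hl2 HS1 HS2 Hsk noE1 noE2 x; split; last first.
  case=> [[|n]] /=; last by case.
  case=> [[nx sx]|[nx sx]]; split=> //.
    exact: ev_on_line HS1 sx.
  exact: ev_on_line HS2 sx.
move=> [nx evx]; have [p [q [sp sq Ex]]] := skew_decompose Hl1 Hl2 Hsk x.
have [q0|nq] := eqVneq q 0.
  by exists 0%N; left; split; rewrite // Ex q0 addr0.
have [p0|np] := eqVneq p 0.
  by exists 0%N; right; split; rewrite // Ex p0 add0r.
exists 1%N; split=> //; right; rewrite Ex in evx *.
have [P [Q [BP BQ HT]]] :=
  sum_third_point Hs Hl1 Hl2 HS1 HS2 Hsk noE1 noE2 sp sq np nq evx.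
by exists P, Q.
Qed.
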